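(* Fix $T>0$. For $a\in\mathbb{R}$ with $aT<1$, let $k_u(a)$ denote the unique solution $k>|a|$ of $$T\sqrt{k^2-a^2}=\arccos\!\left(\frac{a}{k}\right).$$ Then $a\mapsto k_u(a)$ is decreasing and convex on $(-\infty,1/T)$, and $$\lim_{a\to-\infty}\frac{k_u(a)}{|a|}=1,\qquad \lim_{a\to 1/T}k_u(a)=\frac1T .$$
   Context: Consider the scalar retarded system $\dot x(t)=a x(t)-k x(t-T)$ with $a,k\in\mathbb{R}$ and constant delay $T>0$. For $aT<1$, the set of gains $k$ for which this system is exponentially stable is exactly the open interval $(a,k_u)$, where $k_u$ is defined as in the claim. (For $aT\ge 1$ no stabilizing $k$ exists.) *)

From Stdlib Require Import Reals.
From Coquelicot Require Import Coquelicot.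
Open Scope R_scope.

Definition ku_eq (T a k : R) : Prop :=
  Rabs a < k /\ T * sqrt (k ^ 2 - a ^ 2) = acos (a / k).

Definition decreasing_below (f : R -> R) (b : R) : Prop :=
  forall x y, x < y -> y < b -> f y < f x.

Definition convex_below (f : R -> R) (b : R) : Prop :=
  forall x y t, x < b -> y < b -> 0 <= t <= 1 ->
    f (t * x + (1 - t) * y) <= t * f x + (1 - t) * f y.

(* Substituting [t = acos (a / k)] in (0, PI) turns the defining equation into
   [T a = t cos t / sin t] and [T k = t / sin t].  The first map decreases from
   1 to -oo on (0, PI), which gives existence and uniqueness of k_u, and the
   second increases, so k_u decreases.  Along the curve
   [dk/da = - (sin t - t cos t) / (t - sin t cos t)]; this ratio increases in t
   while t decreases in a, so k_u is convex.  The limits follow from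
   [|a| < k <= |a| + PI / T] (as [acos <= PI]) and from
   [T (k + a) = t cos (t/2) / sin (t/2) < 2]. *)

From Stdlib Require Import Reals Lra Ranalysis5.
From Coquelicot Require Import Coquelicot.
Open Scope R_scope.

Lemma lt_of_derive_pos (f df : R -> R) (a b : R) : a < b ->
  (forall x, a <= x <= b -> is_derive f x (df x)) ->
  (forall x, a < x < b -> 0 < df x) -> f a < f b.
Proof.
intros Hab Hf Hdf.
destruct (MVT_cor2 f df a b Hab) as [c [Hc Hac]].
- intros c Hc; apply is_derive_Reals, Hf; exact Hc.
- specialize (Hdf c Hac); nra.
Qed.

Lemma cauchy_mvt (f g df dg : R -> R) (a b : R) : a < b ->
  (forall x, a <= x <= b -> is_derive f x (df x)) ->
  (forall x, a <= x <= b -> is_derive g x (dg x)) ->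
  exists c, a < c < b /\ (f b - f a) * dg c = (g b - g a) * df c.
Proof.
intros Hab Hf Hg.
set (h x := (g b - g a) * f x - (f b - f a) * g x).
destruct (MVT_cor2 h (fun x => (g b - g a) * df x - (f b - f a) * dg x) a b Hab)
  as [c [Hc Hac]].
- intros x Hx; apply is_derive_Reals.
  apply (is_derive_minus (fun x => (g b - g a) * f x) (fun x => (f b - f a) * g x));
    apply is_derive_scal; auto.
- exists c; split; [exact Hac|].
  assert (Hh : h b - h a = 0) by (unfold h; ring).
  rewrite Hh in Hc.
  assert (Hba : b - a <> 0) by lra.
  apply (Rmult_eq_reg_r (b - a)); [|exact Hba].
  assert (((g b - g a) * df c - (f b - f a) * dg c) * (b - a) = 0) by lra.
  nra.
Qed.

Lemma sin_sub_mul_cos_pos t : 0 < t < PI -> 0 < sin t - t * cos t.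
Proof.
intros Ht.
replace 0 with (sin 0 - 0 * cos 0) at 1 by (rewrite sin_0; ring).
apply (lt_of_derive_pos (fun t => sin t - t * cos t) (fun t => t * sin t)); [lra| |].
- intros x _; auto_derive; auto; ring.
- intros x Hx; assert (0 < sin x) by (apply sin_gt_0; lra); nra.
Qed.

Lemma sub_sin_mul_cos_pos t : 0 < t -> 0 < t - sin t * cos t.
Proof.
intros Ht; pose proof (sin_lt_x (2 * t) ltac:(lra)) as H.
rewrite sin_2a in H; lra.
Qed.

(* Differentiating twice gives [4 sin t (sin t - t cos t)], and the polynomial
   and its derivative vanish at [0]. *)
Lemma slope_ratio_num_pos t : 0 < t < PI ->
  0 < t ^ 2 + t * sin t * cos t - 2 * sin t ^ 2.
Proof.
intros Ht.
assert (Hderiv_pos : forall x, 0 < x < PI ->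
          0 < 2 * x - 3 * sin x * cos x + x * (cos x ^ 2 - sin x ^ 2)).
{ intros x Hx.
  replace 0 with (2 * 0 - 3 * sin 0 * cos 0 + 0 * (cos 0 ^ 2 - sin 0 ^ 2)) at 1
    by (rewrite sin_0; ring).
  apply (lt_of_derive_pos (fun y => 2 * y - 3 * sin y * cos y + y * (cos y ^ 2 - sin y ^ 2))
    (fun y => 4 * sin y * (sin y - y * cos y))); [lra| |].
  - intros y _; auto_derive; auto.
    pose proof (sin2_cos2 y) as E; unfold Rsqr in E; nra.
  - intros y Hy.
    assert (0 < sin y) by (apply sin_gt_0; lra).
    pose proof (sin_sub_mul_cos_pos y ltac:(lra)); nra. }
replace 0 with (0 ^ 2 + 0 * sin 0 * cos 0 - 2 * sin 0 ^ 2) at 1 by (rewrite sin_0; ring).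
apply (lt_of_derive_pos (fun y => y ^ 2 + y * sin y * cos y - 2 * sin y ^ 2)
  (fun y => 2 * y - 3 * sin y * cos y + y * (cos y ^ 2 - sin y ^ 2)));
  [lra| |].
- intros y _; auto_derive; auto; ring.
- intros y Hy; apply Hderiv_pos; lra.
Qed.

Definition a_param t := t * cos t / sin t.
Definition k_param t := t / sin t.
(* [slope_ratio] is [- dk/da] along the curve [t |-> (a_param t, k_param t)]. *)
Definition slope_ratio t := (sin t - t * cos t) / (t - sin t * cos t).

Lemma is_derive_a_param t : sin t <> 0 ->
  is_derive a_param t (- (t - sin t * cos t) / sin t ^ 2).
Proof.
intros Hs; unfold a_param; auto_derive; auto.
pose proof (sin2_cos2 t) as E; unfold Rsqr in E.
field_simplify; auto; f_equal.
replace (cos t ^ 2) with (1 - sin t ^ 2) by lra; ring.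
Qed.

Lemma is_derive_k_param t : sin t <> 0 ->
  is_derive k_param t ((sin t - t * cos t) / sin t ^ 2).
Proof. intros Hs; unfold k_param; auto_derive; auto; field; auto. Qed.

Lemma is_derive_slope_ratio t : t - sin t * cos t <> 0 ->
  is_derive slope_ratio t
    (sin t * (t ^ 2 + t * sin t * cos t - 2 * sin t ^ 2) / (t - sin t * cos t) ^ 2).
Proof.
intros HD; unfold slope_ratio; auto_derive; auto.
pose proof (sin2_cos2 t) as E; unfold Rsqr in E.
field_simplify; auto; f_equal.
replace (cos t ^ 3) with (cos t * cos t ^ 2) by ring.
replace (cos t ^ 2) with (1 - sin t ^ 2) by lra; ring.
Qed.

Lemma a_param_decreasing x y : 0 < x -> x < y -> y < PI -> a_param y < a_param x.
Proof.
intros Hx Hxy Hy.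
enough (- a_param x < - a_param y) by lra.
apply (lt_of_derive_pos (fun t => - a_param t)
         (fun t => (t - sin t * cos t) / sin t ^ 2)); [exact Hxy| |].
- intros t Ht.
  assert (Hs : 0 < sin t) by (apply sin_gt_0; lra).
  replace ((t - sin t * cos t) / sin t ^ 2)
    with (- (- (t - sin t * cos t) / sin t ^ 2)) by (field; lra).
  apply (is_derive_opp a_param), is_derive_a_param; lra.
- intros t Ht.
  assert (0 < sin t) by (apply sin_gt_0; lra).
  pose proof (sub_sin_mul_cos_pos t ltac:(lra)).
  apply Rdiv_lt_0_compat; [lra | apply pow_lt; lra].
Qed.

Lemma a_param_inj x y : 0 < x < PI -> 0 < y < PI -> a_param x = a_param y -> x = y.
Proof.
intros Hx Hy E; destruct (Rtotal_order x y) as [H|[H|H]]; auto.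
- pose proof (a_param_decreasing x y ltac:(lra) H ltac:(lra)); lra.
- pose proof (a_param_decreasing y x ltac:(lra) H ltac:(lra)); lra.
Qed.

Lemma lt_of_a_param_lt x y : 0 < x < PI -> 0 < y < PI ->
  a_param x < a_param y -> y < x.
Proof.
intros Hx Hy E; destruct (Rtotal_order x y) as [H|[H|H]]; auto.
- pose proof (a_param_decreasing x y ltac:(lra) H ltac:(lra)); lra.
- subst; lra.
Qed.

Lemma k_param_increasing x y : 0 < x -> x < y -> y < PI -> k_param x < k_param y.
Proof.
intros Hx Hxy Hy.
apply (lt_of_derive_pos k_param (fun t => (sin t - t * cos t) / sin t ^ 2));
  [exact Hxy| |].
- intros t Ht; apply is_derive_k_param.
  pose proof (sin_gt_0 t ltac:(lra) ltac:(lra)); lra.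
- intros t Ht.
  pose proof (sin_gt_0 t ltac:(lra) ltac:(lra)).
  pose proof (sin_sub_mul_cos_pos t ltac:(lra)).
  apply Rdiv_lt_0_compat; [lra | apply pow_lt; lra].
Qed.

Lemma slope_ratio_increasing x y : 0 < x -> x < y -> y < PI ->
  slope_ratio x < slope_ratio y.
Proof.
intros Hx Hxy Hy.
apply (lt_of_derive_pos slope_ratio (fun t =>
  sin t * (t ^ 2 + t * sin t * cos t - 2 * sin t ^ 2) / (t - sin t * cos t) ^ 2));
  [exact Hxy| |].
- intros t Ht; apply is_derive_slope_ratio.
  pose proof (sub_sin_mul_cos_pos t ltac:(lra)); lra.
- intros t Ht.
  pose proof (sin_gt_0 t ltac:(lra) ltac:(lra)).
  pose proof (slope_ratio_num_pos t ltac:(lra)).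
  pose proof (sub_sin_mul_cos_pos t ltac:(lra)).
  apply Rdiv_lt_0_compat; [nra | apply pow_lt; lra].
Qed.

Lemma k_param_chord x y : 0 < x -> x < y -> y < PI ->
  exists c, x < c < y /\
    k_param y - k_param x = (a_param x - a_param y) * slope_ratio c.
Proof.
intros Hx Hxy Hy.
destruct (cauchy_mvt k_param a_param
  (fun t => (sin t - t * cos t) / sin t ^ 2)
  (fun t => - (t - sin t * cos t) / sin t ^ 2) x y Hxy) as [c [Hc E]].
- intros t Ht; apply is_derive_k_param; pose proof (sin_gt_0 t ltac:(lra) ltac:(lra)); lra.
- intros t Ht; apply is_derive_a_param; pose proof (sin_gt_0 t ltac:(lra) ltac:(lra)); lra.
- exists c; split; [exact Hc|].
  pose proof (sin_gt_0 c ltac:(lra) ltac:(lra)).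
  pose proof (sub_sin_mul_cos_pos c ltac:(lra)).
  unfold slope_ratio.
  apply (Rmult_eq_reg_r (- (c - sin c * cos c) / sin c ^ 2)).
  + rewrite E; field; lra.
  + apply Rmult_integral_contrapositive; split;
      [lra | apply Rinv_neq_0_compat, pow_nonzero; lra].
Qed.

Lemma a_param_lt_1 t : 0 < t < PI -> a_param t < 1.
Proof.
intros Ht; unfold a_param.
pose proof (sin_gt_0 t (proj1 Ht) (proj2 Ht)).
pose proof (sin_sub_mul_cos_pos t Ht).
apply (Rmult_lt_reg_r (sin t)); [lra|].
field_simplify; lra.
Qed.

Lemma k_param_add_a_param t : 0 < t < PI ->
  k_param t + a_param t = 2 * a_param (t / 2).
Proof.
intros Ht; unfold k_param, a_param.
set (x := t / 2).
assert (0 < sin x) by (apply sin_gt_0; unfold x; lra).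
assert (0 < cos x) by (apply cos_gt_0; unfold x; lra).
replace t with (2 * x) by (unfold x; field).
rewrite sin_2a, cos_2a_cos; field; lra.
Qed.

Lemma one_sub_sqr_div2_lt_cos u : 0 < u -> 1 - u ^ 2 / 2 < cos u.
Proof.
intros Hu.
enough (cos 0 - 1 + 0 ^ 2 / 2 < cos u - 1 + u ^ 2 / 2) by (rewrite cos_0 in *; lra).
apply (lt_of_derive_pos (fun u => cos u - 1 + u ^ 2 / 2) (fun u => u - sin u));
  [exact Hu| |].
- intros x _; auto_derive; auto; field.
- intros x Hx; pose proof (sin_lt_x x ltac:(lra)); lra.
Qed.

Lemma continuity_pt_a_param t : 0 < t < PI -> continuity_pt a_param t.
Proof.
intros Ht; apply derivable_continuous_pt.
exists (- (t - sin t * cos t) / sin t ^ 2).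
apply is_derive_Reals, is_derive_a_param.
pose proof (sin_gt_0 t (proj1 Ht) (proj2 Ht)); lra.
Qed.

(* IVT between [u] and [PI - e]: [a_param u >= cos u > 1 - u ^ 2 / 2], and
   [a_param (PI - e) <= - / e] once [e <= 1/2]. *)
Lemma a_param_surj y : y < 1 -> exists t, 0 < t < PI /\ a_param t = y.
Proof.
intros Hy.
pose proof PI2_3_2.
set (u := Rmin 1 (1 - y)).
assert (Hu : 0 < u <= 1 /\ u <= 1 - y)
  by (unfold u; repeat split; [apply Rmin_glb_lt | apply Rmin_l | apply Rmin_r]; lra).
set (e := / (Rabs y + 2)).
assert (He : 0 < e <= 1 / 2 /\ - / e < y).
{ pose proof (Rabs_pos y); pose proof (Rle_abs (- y)); rewrite Rabs_Ropp in *.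
  unfold e; rewrite Rinv_inv; split; [split|]; [apply Rinv_0_lt_compat; lra| |lra].
  apply (Rmult_le_reg_r (Rabs y + 2)); [lra|]; rewrite Rinv_l; lra. }
assert (Hlow : y < a_param u).
{ pose proof (one_sub_sqr_div2_lt_cos u ltac:(lra)).
  pose proof (sin_lt_x u ltac:(lra)).
  pose proof (sin_gt_0 u ltac:(lra) ltac:(lra)).
  unfold a_param; apply (Rmult_lt_reg_r (sin u)); [lra|].
  field_simplify; [nra | lra]. }
assert (Hhigh : a_param (PI - e) < y).
{ unfold a_param; rewrite sin_PI_x, Rtrigo_facts.cos_pi_minus.
  pose proof (one_sub_sqr_div2_lt_cos e ltac:(lra)).
  pose proof (sin_lt_x e ltac:(lra)).
  pose proof (sin_gt_0 e ltac:(lra) ltac:(lra)).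
  assert (Hinv : / e <= / sin e) by (apply Rinv_le_contravar; lra).
  assert (0 < / e) by (apply Rinv_0_lt_compat; lra).
  assert (1 / 2 <= cos e) by nra.
  assert (1 <= (PI - e) * cos e) by nra.
  assert (/ e <= (PI - e) * cos e * / sin e) by nra.
  unfold Rdiv; lra. }
destruct (IVT_interv (fun t => y - a_param t) u (PI - e)) as [t [Ht E]].
- intros t Ht; apply continuity_pt_minus;
    [apply continuity_pt_const; intros ? ?; reflexivity|].
  apply continuity_pt_a_param; lra.
1-3: lra.
exists t; split; lra.
Qed.

Lemma div_in_open_unit a k : Rabs a < k -> -1 < a / k < 1.
Proof.
intros Hk; pose proof (Rabs_pos a); destruct (Rabs_def2 _ _ Hk).
split; apply (Rmult_lt_reg_r k); try lra; field_simplify; lra.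
Qed.

Lemma sqrt_sqr_sub_sqr a k : Rabs a < k ->
  sqrt (k ^ 2 - a ^ 2) = k * sin (acos (a / k)).
Proof.
intros Hk; pose proof (Rabs_pos a); pose proof (div_in_open_unit a k Hk).
rewrite sin_acos by lra.
replace (k ^ 2 - a ^ 2) with (k² * (1 - (a / k)²)) by (unfold Rsqr; field; lra).
rewrite sqrt_mult, sqrt_Rsqr; [reflexivity | lra | apply Rle_0_sqr |].
unfold Rsqr; nra.
Qed.

Lemma ku_eq_param T a k : 0 < T -> ku_eq T a k ->
  exists t, 0 < t < PI /\ T * a = a_param t /\ T * k = k_param t.
Proof.
intros HT [Hk E].
pose proof (Rabs_pos a); pose proof (div_in_open_unit a k Hk).
set (t := acos (a / k)) in E.
assert (Ht : 0 < t < PI) by (apply acos_bound_lt; lra).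
assert (Hc : cos t = a / k) by (apply cos_acos; lra).
pose proof (sin_gt_0 t (proj1 Ht) (proj2 Ht)).
rewrite sqrt_sqr_sub_sqr in E by exact Hk; fold t in E.
exists t; unfold a_param, k_param; repeat split; try lra.
- rewrite Hc, <- E at 1; field; lra.
- rewrite <- E at 1; field; lra.
Qed.

Lemma ku_eq_of_param T t : 0 < T -> 0 < t < PI ->
  ku_eq T (a_param t / T) (k_param t / T).
Proof.
intros HT Ht; pose proof (sin_gt_0 t (proj1 Ht) (proj2 Ht)) as Hs.
assert (Hk : Rabs (a_param t / T) < k_param t / T).
{ pose proof (sin2_cos2 t) as S; unfold Rsqr in S.
  assert (Hc : -1 < cos t < 1) by (split; nra).
  assert (0 < t / sin t / T) by (repeat apply Rdiv_lt_0_compat; lra).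
  unfold a_param, k_param; apply Rabs_def1;
    apply (Rmult_lt_reg_r (sin t * T)); try nra; field_simplify; nra. }
assert (Hcos : a_param t / T / (k_param t / T) = cos t)
  by (unfold a_param, k_param; field; lra).
split; [exact Hk|].
rewrite sqrt_sqr_sub_sqr, Hcos, acos_cos by lra.
unfold k_param; field; lra.
Qed.

Lemma ku_eq_le_abs_add T a k : 0 < T -> ku_eq T a k -> k <= Rabs a + PI / T.
Proof.
intros HT [Hk E].
pose proof (Rabs_pos a); pose proof PI_RGT_0.
pose proof (acos_bound (a / k)).
assert (Hs : sqrt (k ^ 2 - a ^ 2) <= PI / T)
  by (apply (Rmult_le_reg_l T); [lra|]; rewrite E; field_simplify; lra).
assert (Hd : 0 <= k ^ 2 - Rabs a ^ 2) by nra.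
replace (a ^ 2) with (Rabs a ^ 2) in Hs by apply pow2_abs.
pose proof (sqrt_sqrt _ Hd); pose proof (sqrt_pos (k ^ 2 - Rabs a ^ 2)).
assert (0 < PI / T) by (apply Rdiv_lt_0_compat; lra).
nra.
Qed.

Lemma ku_exists_unique T a : 0 < T -> a * T < 1 -> exists! k, ku_eq T a k.
Proof.
intros HT Ha.
destruct (a_param_surj (a * T) Ha) as [t [Ht Et]].
exists (k_param t / T); split.
- replace a with (a_param t / T) by (rewrite Et; field; lra).
  exact (ku_eq_of_param T t HT Ht).
- intros k Hk; destruct (ku_eq_param T a k HT Hk) as [t' [Ht' [Ea Ek]]].
  assert (t' = t) by (apply a_param_inj; lra).
  subst t'; rewrite <- Ek; field; lra.
Qed.

Lemma convex_below_of_chord (f : R -> R) (b : R) :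
  (forall x z y, x < z -> z < y -> y < b ->
     (f z - f x) * (y - z) <= (f y - f z) * (z - x)) ->
  convex_below f b.
Proof.
intros Hchord.
assert (Hord : forall x y t, x < y -> y < b -> 0 < t < 1 ->
          f (t * x + (1 - t) * y) <= t * f x + (1 - t) * f y).
{ intros x y t Hxy Hy Ht.
  set (z := t * x + (1 - t) * y).
  pose proof (Hchord x z y ltac:(unfold z; nra) ltac:(unfold z; nra) Hy) as H.
  replace (y - z) with (t * (y - x)) in H by (unfold z; ring).
  replace (z - x) with ((1 - t) * (y - x)) in H by (unfold z; ring).
  apply (Rmult_le_reg_r (y - x)); [lra | nra]. }
intros x y t Hx Hy Ht.
destruct (Req_dec t 0) as [->|H0].
{ replace (0 * x + (1 - 0) * y) with y by ring; lra. }
destruct (Req_dec t 1) as [->|H1].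
{ replace (1 * x + (1 - 1) * y) with x by ring; lra. }
destruct (Rtotal_order x y) as [H|[->|H]].
- apply Hord; lra.
- replace (t * y + (1 - t) * y) with y by ring; lra.
- replace (t * x + (1 - t) * y) with ((1 - t) * y + (1 - (1 - t)) * x) by ring.
  pose proof (Hord y x (1 - t) H Hx ltac:(lra)); lra.
Qed.

Lemma is_lim_one_add_div_abs (C : R) :
  is_lim (fun a => 1 + C / Rabs a) m_infty 1.
Proof.
assert (Hinv : is_lim (fun a => / Rabs a) m_infty 0).
{ apply (is_lim_inv (fun a => Rabs a) m_infty p_infty); [|discriminate].
  apply (is_lim_Rabs (fun a => a) m_infty m_infty), is_lim_id. }
pose proof (is_lim_plus' _ _ _ _ _ (is_lim_const 1 m_infty)
              (is_lim_scal_l _ C _ _ Hinv)) as H.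
simpl in H; rewrite Rmult_0_r, Rplus_0_r in H; exact H.
Qed.

Lemma is_lim_div_abs_of_bounds (f : R -> R) (C : R) :
  (forall a, a < 0 -> Rabs a < f a <= Rabs a + C) ->
  is_lim (fun a => f a / Rabs a) m_infty 1.
Proof.
intros Hf.
apply (is_lim_le_le_loc (fun _ => 1) (fun a => 1 + C / Rabs a));
  [| apply is_lim_const | apply is_lim_one_add_div_abs].
exists 0; intros a Ha.
specialize (Hf a Ha); rewrite Rabs_left in * by lra.
split; apply (Rmult_le_reg_r (- a)); try lra; field_simplify; lra.
Qed.

Lemma filterlim_at_left_of_reflect_bounds (f : R -> R) (x : R) :
  (forall a, a < x -> a <= f a <= 2 * x - a) ->
  filterlim f (at_left x) (locally x).
Proof.
intros Hf; apply filterlim_locally; intros eps.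
exists eps; intros a Ha Hax.
change (Rabs (a - x) < eps) in Ha; change (Rabs (f a - x) < eps).
specialize (Hf a Hax); rewrite Rabs_left in Ha by lra.
apply Rabs_def1; lra.
Qed.

Section Solution_branch.

Variables (T : R) (ku : R -> R).
Hypothesis HT : 0 < T.
Hypothesis Hku : forall a, a * T < 1 -> ku_eq T a (ku a).

Lemma ku_eq_below a : a < / T -> ku_eq T a (ku a).
Proof.
intros Ha; apply Hku.
apply (Rmult_lt_compat_r T) in Ha; [rewrite Rinv_l in Ha; lra | exact HT].
Qed.

Lemma ku_param a : a < / T ->
  exists t, 0 < t < PI /\ T * a = a_param t /\ T * ku a = k_param t.
Proof. intros Ha; exact (ku_eq_param T a (ku a) HT (ku_eq_below a Ha)). Qed.

Lemma ku_decreasing : decreasing_below ku (/ T).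
Proof.
intros x y Hxy Hy.
destruct (ku_param x ltac:(lra)) as [tx [Htx [Ax Kx]]].
destruct (ku_param y Hy) as [ty [Hty [Ay Ky]]].
assert (Ht : ty < tx) by (apply lt_of_a_param_lt; nra).
pose proof (k_param_increasing ty tx ltac:(lra) Ht ltac:(lra)); nra.
Qed.

Lemma ku_chord x z y : x < z -> z < y -> y < / T ->
  (ku z - ku x) * (y - z) <= (ku y - ku z) * (z - x).
Proof.
intros Hxz Hzy Hy.
destruct (ku_param x ltac:(lra)) as [tx [Htx [Ax Kx]]].
destruct (ku_param z ltac:(lra)) as [tz [Htz [Az Kz]]].
destruct (ku_param y Hy) as [ty [Hty [Ay Ky]]].
assert (Hzx : tz < tx) by (apply lt_of_a_param_lt; nra).
assert (Hyz : ty < tz) by (apply lt_of_a_param_lt; nra).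
destruct (k_param_chord tz tx ltac:(lra) Hzx ltac:(lra)) as [c1 [Hc1 E1]].
destruct (k_param_chord ty tz ltac:(lra) Hyz ltac:(lra)) as [c2 [Hc2 E2]].
pose proof (slope_ratio_increasing c2 c1 ltac:(lra) ltac:(lra) ltac:(lra)).
assert (S1 : ku z - ku x = - (z - x) * slope_ratio c1).
{ apply (Rmult_eq_reg_l T); [|lra].
  replace (T * (ku z - ku x)) with (- (k_param tx - k_param tz)) by lra.
  rewrite E1, <- Ax, <- Az; ring. }
assert (S2 : ku y - ku z = - (y - z) * slope_ratio c2).
{ apply (Rmult_eq_reg_l T); [|lra].
  replace (T * (ku y - ku z)) with (- (k_param tz - k_param ty)) by lra.
  rewrite E2, <- Az, <- Ay; ring. }
assert (0 < (z - x) * (y - z)) by nra.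
rewrite S1, S2; nra.
Qed.

Lemma ku_convex : convex_below ku (/ T).
Proof. apply convex_below_of_chord, ku_chord. Qed.

Lemma ku_lim_m_infty : is_lim (fun a => ku a / Rabs a) m_infty 1.
Proof.
apply (is_lim_div_abs_of_bounds ku (PI / T)); intros a Ha.
assert (Hk : ku_eq T a (ku a))
  by (apply ku_eq_below; pose proof (Rinv_0_lt_compat T HT); lra).
split; [apply Hk | exact (ku_eq_le_abs_add T a (ku a) HT Hk)].
Qed.

Lemma ku_lim_at_left : filterlim ku (at_left (/ T)) (locally (/ T)).
Proof.
apply filterlim_at_left_of_reflect_bounds; intros a Ha.
pose proof (ku_eq_below a Ha) as [Hk _].
destruct (ku_param a Ha) as [t [Ht [Ea Ek]]].
pose proof (k_param_add_a_param t Ht).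
pose proof (a_param_lt_1 (t / 2) ltac:(lra)).
pose proof (Rle_abs a).
split; [lra|].
apply (Rmult_le_reg_l T); [exact HT|].
replace (T * (2 * / T - a)) with (2 - T * a) by (field; lra).
lra.
Qed.

End Solution_branch.

Theorem proposition1 (T : R) (HT : 0 < T) :
  (forall a : R, a * T < 1 -> exists! k : R, ku_eq T a k) /\
  (forall ku : R -> R,
     (forall a : R, a * T < 1 -> ku_eq T a (ku a)) ->
     decreasing_below ku (/ T) /\
     convex_below ku (/ T) /\
     is_lim (fun a => ku a / Rabs a) m_infty 1 /\
     filterlim ku (at_left (/ T)) (locally (/ T))).
Proof.
split; [intros a; exact (ku_exists_unique T a HT)|].
intros ku Hku; repeat split.
- exact (ku_decreasing T ku HT Hku).
- exact (ku_convex T ku HT Hku).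
- exact (ku_lim_m_infty T ku HT Hku).
- exact (ku_lim_at_left T ku HT Hku).
Qed.
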